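(* If $\Omega ; \cdot ; \cdot \vdash P :: x{:}\mathbf{1}[\omega]$ and $\mathrm{live}(P)$, then there exists $Q$ such that $P\to Q$.
   Context: $\mathrm{live}(P)$ holds iff $P \equiv (\nu \tilde{n})(\pi.Q \mid R)$ for some names $\tilde n$, process $R$, and non-replicated guarded process $\pi.Q$ (i.e. $\pi$ is a prefix other than a replicated input $!x(y)$). Domain-aware session $\pi$-calculus. Domains $\omega$ range over domain tags $w$ and domain variables $\alpha$. Processes: $P ::= \mathbf 0 \mid P\mid Q \mid (\nu y)P \mid x\langle y\rangle.P \mid x(y).P \mid !x(y).P \mid [x\leftrightarrow y] \mid x\triangleright\{l_i:P_i\}_{i\in I} \mid x\triangleleft l;P \mid x\langle y@\omega\rangle.P \mid x(y@\omega).P \mid x\langle\omega\rangle.P \mid x(\alpha).P$, with $\overline{x}\langle y\rangle.P := (\nu y)x\langle y\rangle.P$, $\overline{x}\langle y@\omega\rangle.P := (\nu y)x\langle y@\omega\rangle.P$. Structural congruence $\equiv$ is the least congruence with $P\mid\mathbf 0\equiv P$, $\alpha$-conversion, $(\nu x)\mathbf 0\equiv\mathbf 0$, $[x\leftrightarrow y]\equiv[y\leftrightarrow x]$, commutativity and associativity of $\mid$, $P\mid(\nu x)Q\equiv(\nu x)(P\mid Q)$ if $x\notin fn(P)$, $(\nu x)(\nu y)P\equiv(\nu y)(\nu x)P$. Reduction $\to$ is closed under $\equiv$, parallel composition and restriction and given by: $x\langle y\rangle.Q\mid x(z).P\to Q\mid P\{y/z\}$; $x\langle y\rangle.Q\mid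 !x(z).P\to Q\mid P\{y/z\}\mid !x(z).P$; $x\langle y@\omega\rangle.P\mid x(z@\omega').Q\to P\mid Q\{y/z\}$; $x\langle\omega\rangle.P\mid x(\alpha).Q\to P\mid Q\{\omega/\alpha\}$; $(\nu x)([x\leftrightarrow y]\mid P)\to P\{y/x\}$; $x\triangleleft l_j;P\mid x\triangleright\{l_i:Q_i\}_{i\in I}\to P\mid Q_j$ ($j\in I$). Session types: $A ::= \mathbf 1 \mid A\multimap B \mid A\otimes B \mid \&\{l_i:A_i\}_{i\in I} \mid \oplus\{l_i:A_i\}_{i\in I} \mid !A \mid @_\omega A \mid \forall\alpha.A \mid \exists\alpha.A \mid {\downarrow}\alpha.A$. An accessibility environment $\Omega$ is a finite set of hypotheses $\omega_1\prec\omega_2$; $\Omega\vdash\omega_1\prec\omega_2$ holds via the rule $\Omega,\omega_1\prec\omega_2\vdash\omega_1\prec\omega_2$; $\prec^*$ is its reflexive transitive closure; $\Omega\vdash\omega\prec^*\Delta$ means $\Omega\vdash\omega\prec^*\omega'$ for all $x{:}A[\omega']\in\Delta$. The judgment $\Omega;\Gamma;\Delta\vdash P::z{:}A[\omega]$ (unrestricted $\Gamma$, linear $\Delta$; typing closed under $\equiv$) is given by the rules: (id) $\Omega;\Gamma;x{:}A[\omega]\vdash[x\leftrightarrow z]::z{:}A[\omega]$. (1R) $\Omega;\Gamma;\cdot\vdash\mathbf 0::z{:}\mathbf 1[\omega]$. (1L) from $\Delta\vdash P::z{:}C[\omega_1]$ infer $\Delta,x{:}\mathbf 1[\omega_2]\vdash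 P::z{:}C[\omega_1]$. ($\multimap$R) from $\Delta,y{:}A[\omega]\vdash P::z{:}B[\omega]$ infer $\Delta\vdash z(y).P::z{:}A\multimap B[\omega]$. ($\multimap$L) from $\Delta_1\vdash P::y{:}A[\omega_2]$ and $\Delta_2,x{:}B[\omega_2]\vdash Q::z{:}C[\omega_1]$ infer $\Delta_1,\Delta_2,x{:}A\multimap B[\omega_2]\vdash\overline{x}\langle y\rangle.(P\mid Q)::z{:}C[\omega_1]$. ($\otimes$R) from $\Delta_1\vdash P::y{:}A[\omega]$, $\Delta_2\vdash Q::z{:}B[\omega]$ infer $\Delta_1,\Delta_2\vdash\overline{z}\langle y\rangle.(P\mid Q)::z{:}A\otimes B[\omega]$. ($\otimes$L) from $\Delta,y{:}A[\omega_2],x{:}B[\omega_2]\vdash P::z{:}C[\omega_1]$ infer $\Delta,x{:}A\otimes B[\omega_2]\vdash x(y).P::z{:}C[\omega_1]$. ($\&$R) from $\Delta\vdash P_i::z{:}A_i[\omega]$ ($i\in I$) infer $\Delta\vdash z\triangleright\{l_i:P_i\}::z{:}\&\{l_i:A_i\}[\omega]$. ($\&$L$_1$) from $\Delta,x{:}A[\omega_2]\vdash P::z{:}C[\omega_1]$ infer $\Delta,x{:}\&\{l_i:A\}[\omega_2]\vdash x\triangleleft l_i;P::z{:}C[\omega_1]$. ($\&$L$_2$) from $\Delta,x{:}\&\{l_i:A_i\}_{i\in I}[\omega_2]\vdash P::z{:}C[\omega_1]$, $k\notin I$, infer the same with $x{:}\&\{l_j:A_j\}_{j\in I\cup\{k\}}[\omega_2]$.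 ($\oplus$R$_1$) from $\Delta\vdash P::z{:}A[\omega]$ infer $\Delta\vdash z\triangleleft l_i;P::z{:}\oplus\{l_i:A\}[\omega]$. ($\oplus$R$_2$) from $\Delta\vdash P::z{:}\oplus\{l_i:A_i\}_{i\in I}[\omega]$, $k\notin I$, infer $\Delta\vdash P::z{:}\oplus\{l_j:A_j\}_{j\in I\cup\{k\}}[\omega]$. ($\oplus$L) from $\Delta,x{:}A_i[\omega_2]\vdash Q_i::z{:}C[\omega_1]$ ($i\in I$) infer $\Delta,x{:}\oplus\{l_i:A_i\}[\omega_2]\vdash x\triangleright\{l_i:Q_i\}::z{:}C[\omega_1]$. (!R) from $\Omega;\Gamma;\cdot\vdash Q::y{:}A[\omega]$ infer $\Omega;\Gamma;\cdot\vdash\overline{z}\langle u\rangle.!u(y).Q::z{:}!A[\omega]$. (!L) from $\Omega;\Gamma,u{:}A[\omega_2];\Delta\vdash P::z{:}C[\omega_1]$ infer $\Omega;\Gamma;\Delta,x{:}!A[\omega_2]\vdash x(u).P::z{:}C[\omega_1]$. (copy) from $\Omega\vdash\omega_1\prec^*\omega_2$ and $\Omega;\Gamma,u{:}A[\omega_2];\Delta,y{:}A[\omega_2]\vdash P::z{:}C[\omega_1]$ infer $\Omega;\Gamma,u{:}A[\omega_2];\Delta\vdash\overline{u}\langle y\rangle.P::z{:}C[\omega_1]$. (cut) from $\Omega\vdash\omega_1\prec^*\omega_2$, $\Omega\vdash\omega_2\prec^*\Delta_1$, $\Omega;\Gamma;\Delta_1\vdash P::x{:}A[\omega_2]$, $\Omega;\Gamma;\Delta_2,x{:}A[\omega_2]\vdash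 Q::z{:}C[\omega_1]$ infer $\Omega;\Gamma;\Delta_1,\Delta_2\vdash(\nu x)(P\mid Q)::z{:}C[\omega_1]$. (cut$^!$) from $\Omega;\Gamma;\cdot\vdash P::x{:}A[\omega_1]$ and $\Omega;\Gamma,u{:}A[\omega_1];\Delta\vdash Q::z{:}C[\omega_2]$ infer $\Omega;\Gamma;\Delta\vdash(\nu u)(!u(x).P\mid Q)::z{:}C[\omega_2]$. (@R) from $\Omega\vdash\omega_1\prec\omega_2$, $\Omega\vdash\omega_2\prec^*\Delta$, $\Omega;\Gamma;\Delta\vdash P::y{:}A[\omega_2]$ infer $\Omega;\Gamma;\Delta\vdash\overline{z}\langle y@\omega_2\rangle.P::z{:}@_{\omega_2}A[\omega_1]$. (@L) from $\Omega,\omega_2\prec\omega_3;\Gamma;\Delta,y{:}A[\omega_3]\vdash P::z{:}C[\omega_1]$ infer $\Omega;\Gamma;\Delta,x{:}@_{\omega_3}A[\omega_2]\vdash x(y@\omega_3).P::z{:}C[\omega_1]$. ($\forall$R) from $\Omega,\omega_1\prec\alpha;\Gamma;\Delta\vdash P::z{:}A[\omega_1]$, $\alpha$ fresh, infer $\Omega;\Gamma;\Delta\vdash z(\alpha).P::z{:}\forall\alpha.A[\omega_1]$. ($\forall$L) from $\Omega\vdash\omega_2\prec\omega_3$ and $\Omega;\Gamma;\Delta,x{:}A\{\omega_3/\alpha\}[\omega_2]\vdash Q::z{:}C[\omega_1]$ infer $\Omega;\Gamma;\Delta,x{:}\forall\alpha.A[\omega_2]\vdash x\langle\omega_3\rangle.Q::z{:}C[\omega_1]$.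 ($\exists$R) from $\Omega\vdash\omega_1\prec\omega_2$ and $\Omega;\Gamma;\Delta\vdash P::z{:}A\{\omega_2/\alpha\}[\omega_1]$ infer $\Omega;\Gamma;\Delta\vdash z\langle\omega_2\rangle.P::z{:}\exists\alpha.A[\omega_1]$. ($\exists$L) from $\Omega,\omega_2\prec\alpha;\Gamma;\Delta,x{:}A[\omega_2]\vdash Q::z{:}C[\omega_1]$ infer $\Omega;\Gamma;\Delta,x{:}\exists\alpha.A[\omega_2]\vdash x(\alpha).Q::z{:}C[\omega_1]$. (${\downarrow}$R) from $\Delta\vdash P::z{:}A\{\omega/\alpha\}[\omega]$ infer $\Delta\vdash P::z{:}{\downarrow}\alpha.A[\omega]$. (${\downarrow}$L) from $\Delta,x{:}A\{\omega/\alpha\}[\omega]\vdash P::z{:}C$ infer $\Delta,x{:}{\downarrow}\alpha.A[\omega]\vdash P::z{:}C$. *)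

From Stdlib Require Import List Arith Permutation Relations.
Import ListNotations.

Definition name := nat.
Definition dvar := nat.
Definition dtag := nat.
Definition label := nat.

Inductive dom : Type :=
| DTag (w : dtag)
| DVar (a : dvar).

Definition dom_fv (d : dom) : list dvar :=
  match d with DTag _ => [] | DVar a => [a] end.

Inductive proc : Type :=
| PZero
| PPar   (P Q : proc)
| PNu    (x : name) (P : proc)
| POut   (x y : name) (P : proc)
| PIn    (x y : name) (P : proc)                  (* x(y).P, binds y *)
| PRep   (x y : name) (P : proc)                  (* !x(y).P, binds y *)
| PFwd   (x y : name)
| PCase  (x : name) (bs : list (label * proc))
| PSel   (x : name) (l : label) (P : proc)
| POutAt (x y : name) (w : dom) (P : proc)
| PInAt  (x y : name) (w : dom) (P : proc)        (* x(y@w).P, binds y *)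
| POutD  (x : name) (w : dom) (P : proc)
| PInD   (x : name) (a : dvar) (P : proc).        (* x(a).P, binds a *)

Definition PBOut (x y : name) (P : proc) : proc := PNu y (POut x y P).
Definition PBOutAt (x y : name) (w : dom) (P : proc) : proc := PNu y (POutAt x y w P).

Fixpoint fn (P : proc) : list name :=
  match P with
  | PZero => []
  | PPar P Q => fn P ++ fn Q
  | PNu x P => remove Nat.eq_dec x (fn P)
  | POut x y P => x :: y :: fn P
  | PIn x y P => x :: remove Nat.eq_dec y (fn P)
  | PRep x y P => x :: remove Nat.eq_dec y (fn P)
  | PFwd x y => [x; y]
  | PCase x bs =>
      x :: (fix go (bs : list (label * proc)) : list name :=
              match bs with [] => [] | (_, Q) :: bs' => fn Q ++ go bs' end) bs
  | PSel x _ P => x :: fn P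
  | POutAt x y _ P => x :: y :: fn P
  | PInAt x y _ P => x :: remove Nat.eq_dec y (fn P)
  | POutD x _ P => x :: fn P
  | PInD x _ P => x :: fn P
  end.

Fixpoint names (P : proc) : list name :=
  match P with
  | PZero => []
  | PPar P Q => names P ++ names Q
  | PNu x P => x :: names P
  | POut x y P | PIn x y P | PRep x y P => x :: y :: names P
  | PFwd x y => [x; y]
  | PCase x bs =>
      x :: (fix go (bs : list (label * proc)) : list name :=
              match bs with [] => [] | (_, Q) :: bs' => names Q ++ go bs' end) bs
  | PSel x _ P => x :: names P
  | POutAt x y _ P | PInAt x y _ P => x :: y :: names P
  | POutD x _ P | PInD x _ P => x :: names P
  end.

Fixpoint bnames (P : proc) : list name :=
  match P with
  | PZero | PFwd _ _ => []
  | PPar P Q => bnames P ++ bnames Q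
  | PNu x P => x :: bnames P
  | PIn _ y P | PRep _ y P | PInAt _ y _ P => y :: bnames P
  | PCase _ bs =>
      (fix go (bs : list (label * proc)) : list name :=
         match bs with [] => [] | (_, Q) :: bs' => bnames Q ++ go bs' end) bs
  | POut _ _ P | PSel _ _ P | POutAt _ _ _ P | POutD _ _ P | PInD _ _ P => bnames P
  end.

Fixpoint dvars (P : proc) : list dvar :=
  match P with
  | PZero | PFwd _ _ => []
  | PPar P Q => dvars P ++ dvars Q
  | PNu _ P | POut _ _ P | PIn _ _ P | PRep _ _ P | PSel _ _ P => dvars P
  | PCase _ bs =>
      (fix go (bs : list (label * proc)) : list dvar :=
         match bs with [] => [] | (_, Q) :: bs' => dvars Q ++ go bs' end) bs
  | POutAt _ _ w P | PInAt _ _ w P | POutD _ w P => dom_fv w ++ dvars P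
  | PInD _ a P => a :: dvars P
  end.

Fixpoint bdvars (P : proc) : list dvar :=
  match P with
  | PZero | PFwd _ _ => []
  | PPar P Q => bdvars P ++ bdvars Q
  | PNu _ P | POut _ _ P | PIn _ _ P | PRep _ _ P | PSel _ _ P
  | POutAt _ _ _ P | PInAt _ _ _ P | POutD _ _ P => bdvars P
  | PCase _ bs =>
      (fix go (bs : list (label * proc)) : list dvar :=
         match bs with [] => [] | (_, Q) :: bs' => bdvars Q ++ go bs' end) bs
  | PInD _ a P => a :: bdvars P
  end.

(* P{y/x}: replace the free occurrences of x by y (no renaming of binders;
   it is only used under side conditions guaranteeing it is capture-free) *)
Fixpoint nsubst (y x : name) (P : proc) : proc :=
  let r n := if Nat.eqb n x then y else n in
  match P with
  | PZero => PZero
  | PPar P Q => PPar (nsubst y x P) (nsubst y x Q)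
  | PNu z P => PNu z (if Nat.eqb z x then P else nsubst y x P)
  | POut a b P => POut (r a) (r b) (nsubst y x P)
  | PIn a b P => PIn (r a) b (if Nat.eqb b x then P else nsubst y x P)
  | PRep a b P => PRep (r a) b (if Nat.eqb b x then P else nsubst y x P)
  | PFwd a b => PFwd (r a) (r b)
  | PCase a bs =>
      PCase (r a)
        ((fix go (bs : list (label * proc)) : list (label * proc) :=
            match bs with [] => [] | (l, Q) :: bs' => (l, nsubst y x Q) :: go bs' end) bs)
  | PSel a l P => PSel (r a) l (nsubst y x P)
  | POutAt a b w P => POutAt (r a) (r b) w (nsubst y x P)
  | PInAt a b w P => PInAt (r a) b w (if Nat.eqb b x then P else nsubst y x P)
  | POutD a w P => POutD (r a) w (nsubst y x P)
  | PInD a al P => PInD (r a) al (nsubst y x P)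
  end.

Definition dren (d : dom) (a : dvar) (w : dom) : dom :=
  match w with DVar b => if Nat.eqb b a then d else w | DTag _ => w end.

Fixpoint dsubst (d : dom) (a : dvar) (P : proc) : proc :=
  match P with
  | PZero => PZero
  | PPar P Q => PPar (dsubst d a P) (dsubst d a Q)
  | PNu z P => PNu z (dsubst d a P)
  | POut x y P => POut x y (dsubst d a P)
  | PIn x y P => PIn x y (dsubst d a P)
  | PRep x y P => PRep x y (dsubst d a P)
  | PFwd x y => PFwd x y
  | PCase x bs =>
      PCase x
        ((fix go (bs : list (label * proc)) : list (label * proc) :=
            match bs with [] => [] | (l, Q) :: bs' => (l, dsubst d a Q) :: go bs' end) bs)
  | PSel x l P => PSel x l (dsubst d a P)
  | POutAt x y w P => POutAt x y (dren d a w) (dsubst d a P)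
  | PInAt x y w P => PInAt x y (dren d a w) (dsubst d a P)
  | POutD x w P => POutD x (dren d a w) (dsubst d a P)
  | PInD x b P => PInD x b (if Nat.eqb b a then P else dsubst d a P)
  end.

(* Structural congruence: least congruence containing the axioms,
   alpha-conversion (of bound names and bound domain variables) included. *)
Inductive sc : proc -> proc -> Prop :=
| sc_refl P : sc P P
| sc_sym P Q : sc P Q -> sc Q P
| sc_trans P Q R : sc P Q -> sc Q R -> sc P R
| sc_par_l P P' Q : sc P P' -> sc (PPar P Q) (PPar P' Q)
| sc_par_r P Q Q' : sc Q Q' -> sc (PPar P Q) (PPar P Q')
| sc_nu x P P' : sc P P' -> sc (PNu x P) (PNu x P')
| sc_out x y P P' : sc P P' -> sc (POut x y P) (POut x y P')
| sc_in x y P P' : sc P P' -> sc (PIn x y P) (PIn x y P')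
| sc_rep x y P P' : sc P P' -> sc (PRep x y P) (PRep x y P')
| sc_case x bs1 bs2 l P P' :
    sc P P' -> sc (PCase x (bs1 ++ (l, P) :: bs2)) (PCase x (bs1 ++ (l, P') :: bs2))
| sc_sel x l P P' : sc P P' -> sc (PSel x l P) (PSel x l P')
| sc_outat x y w P P' : sc P P' -> sc (POutAt x y w P) (POutAt x y w P')
| sc_inat x y w P P' : sc P P' -> sc (PInAt x y w P) (PInAt x y w P')
| sc_outd x w P P' : sc P P' -> sc (POutD x w P) (POutD x w P')
| sc_cong_ind x a P P' : sc P P' -> sc (PInD x a P) (PInD x a P')
| sc_par_zero P : sc (PPar P PZero) P
| sc_alpha_nu x y P :
    ~ In y (names P) -> sc (PNu x P) (PNu y (nsubst y x P))
| sc_alpha_in a x y P :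
    ~ In y (names P) -> sc (PIn a x P) (PIn a y (nsubst y x P))
| sc_alpha_rep a x y P :
    ~ In y (names P) -> sc (PRep a x P) (PRep a y (nsubst y x P))
| sc_alpha_inat a x y w P :
    ~ In y (names P) -> sc (PInAt a x w P) (PInAt a y w (nsubst y x P))
| sc_alpha_ind a al be P :
    ~ In be (dvars P) -> sc (PInD a al P) (PInD a be (dsubst (DVar be) al P))
| sc_nu_zero x : sc (PNu x PZero) PZero
| sc_fwd x y : sc (PFwd x y) (PFwd y x)
| sc_par_comm P Q : sc (PPar P Q) (PPar Q P)
| sc_par_assoc P Q R : sc (PPar (PPar P Q) R) (PPar P (PPar Q R))
| sc_extr x P Q : ~ In x (fn P) -> sc (PPar P (PNu x Q)) (PNu x (PPar P Q))
| sc_nu_swap x y P : sc (PNu x (PNu y P)) (PNu y (PNu x P)).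

(* Reduction.  Substitutions are required to be capture-free; since
   reduction is closed under sc (which contains alpha-conversion), bound
   names can always be renamed first. *)
Inductive red : proc -> proc -> Prop :=
| red_comm x y z Q P :
    ~ In y (bnames P) ->
    red (PPar (POut x y Q) (PIn x z P)) (PPar Q (nsubst y z P))
| red_rep x y z Q P :
    ~ In y (bnames P) ->
    red (PPar (POut x y Q) (PRep x z P)) (PPar (PPar Q (nsubst y z P)) (PRep x z P))
| red_at x y z w w' P Q :
    ~ In y (bnames Q) ->
    red (PPar (POutAt x y w P) (PInAt x z w' Q)) (PPar P (nsubst y z Q))
| red_dom x w a P Q :
    (forall b, In b (dom_fv w) -> ~ In b (bdvars Q)) ->
    red (PPar (POutD x w P) (PInD x a Q)) (PPar P (dsubst w a Q))
| red_fwd x y P :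
    ~ In y (bnames P) ->
    red (PNu x (PPar (PFwd x y) P)) (nsubst y x P)
| red_case x l P bs Qj :
    In (l, Qj) bs ->
    red (PPar (PSel x l P) (PCase x bs)) (PPar P Qj)
| red_par P P' Q : red P P' -> red (PPar P Q) (PPar P' Q)
| red_nu x P P' : red P P' -> red (PNu x P) (PNu x P')
| red_sc P P' Q' Q : sc P P' -> red P' Q' -> sc Q' Q -> red P Q.

Fixpoint nus (ns : list name) (P : proc) : proc :=
  match ns with [] => P | x :: ns' => PNu x (nus ns' P) end.

Definition guarded (P : proc) : Prop :=
  match P with
  | POut _ _ _ | PIn _ _ _ | PCase _ _ | PSel _ _ _
  | POutAt _ _ _ _ | PInAt _ _ _ _ | POutD _ _ _ | PInD _ _ _ => True
  | _ => False
  end.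

Definition live (P : proc) : Prop :=
  exists (ns : list name) (G R : proc),
    guarded G /\ sc P (nus ns (PPar G R)).

(* Domain variables bound by forall/exists/down are
   represented locally-nameless (de Bruijn indices TB), so A{w/alpha} is
   the opening operation and no alpha-conversion on types is needed. *)
Inductive tdom : Type :=
| TD (d : dom)
| TB (n : nat).

Inductive stype : Type :=
| TOne
| TLolli  (A B : stype)
| TTensor (A B : stype)
| TWith   (bs : list (label * stype))
| TPlus   (bs : list (label * stype))
| TBang   (A : stype)
| TAt     (d : tdom) (A : stype)
| TAll    (A : stype)
| TEx     (A : stype)
| TDown   (A : stype).

Definition open_td (k : nat) (d : dom) (t : tdom) : tdom :=
  match t with TB n => if Nat.eqb n k then TD d else t | TD _ => t end.

Fixpoint open_rec (k : nat) (d : dom) (A : stype) : stype :=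
  match A with
  | TOne => TOne
  | TLolli A B => TLolli (open_rec k d A) (open_rec k d B)
  | TTensor A B => TTensor (open_rec k d A) (open_rec k d B)
  | TWith bs =>
      TWith ((fix go (bs : list (label * stype)) :=
                match bs with [] => [] | (l, B) :: bs' => (l, open_rec k d B) :: go bs' end) bs)
  | TPlus bs =>
      TPlus ((fix go (bs : list (label * stype)) :=
                match bs with [] => [] | (l, B) :: bs' => (l, open_rec k d B) :: go bs' end) bs)
  | TBang A => TBang (open_rec k d A)
  | TAt t A => TAt (open_td k d t) (open_rec k d A)
  | TAll A => TAll (open_rec (S k) d A)
  | TEx A => TEx (open_rec (S k) d A)
  | TDown A => TDown (open_rec (S k) d A)
  end.

Definition open (A : stype) (d : dom) : stype := open_rec 0 d A.

Definition tdom_fv (t : tdom) : list dvar :=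
  match t with TD d => dom_fv d | TB _ => [] end.

Fixpoint ty_fv (A : stype) : list dvar :=
  match A with
  | TOne => []
  | TLolli A B | TTensor A B => ty_fv A ++ ty_fv B
  | TWith bs | TPlus bs =>
      (fix go (bs : list (label * stype)) :=
         match bs with [] => [] | (_, B) :: bs' => ty_fv B ++ go bs' end) bs
  | TBang A | TAll A | TEx A | TDown A => ty_fv A
  | TAt t A => tdom_fv t ++ ty_fv A
  end.

Definition accenv := list (dom * dom).
Definition acc (O : accenv) (w1 w2 : dom) : Prop := In (w1, w2) O.
Definition reach (O : accenv) : dom -> dom -> Prop :=
  clos_refl_trans dom (acc O).

Definition ctx := list (name * (stype * dom)).

Definition reach_ctx (O : accenv) (w : dom) (D : ctx) : Prop :=
  forall x A w', In (x, (A, w')) D -> reach O w w'.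

Definition ctx_fv (G : ctx) : list dvar :=
  flat_map (fun e => ty_fv (fst (snd e)) ++ dom_fv (snd (snd e))) G.
Definition accenv_fv (O : accenv) : list dvar :=
  flat_map (fun p => dom_fv (fst p) ++ dom_fv (snd p)) O.

(* the judgment  O; G; D |- P :: z:A[w]  is formed only when the names of
   G, D and z are pairwise distinct *)
Definition wfj (G D : ctx) (z : name) : Prop :=
  NoDup (z :: map fst G ++ map fst D).

Definition fresh_j (y : name) (G D : ctx) (z : name) : Prop :=
  ~ In y (z :: map fst G ++ map fst D).

(* Typing:  typed O G D P z A w   stands for   O; G; D |- P :: z:A[w] *)
Inductive typed : accenv -> ctx -> ctx -> proc -> name -> stype -> dom -> Prop :=
| T_id O G x z A w :
    wfj G [(x, (A, w))] z ->
    typed O G [(x, (A, w))] (PFwd x z) z A w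
| T_1R O G z w :
    wfj G [] z ->
    typed O G [] PZero z TOne w
| T_1L O G D P z C w1 x w2 :
    typed O G D P z C w1 ->
    wfj G ((x, (TOne, w2)) :: D) z ->
    typed O G ((x, (TOne, w2)) :: D) P z C w1
| T_lolliR O G D y A B P z w :
    typed O G ((y, (A, w)) :: D) P z B w ->
    wfj G D z ->
    typed O G D (PIn z y P) z (TLolli A B) w
| T_lolliL O G D1 D2 P y A w2 Q x B z C w1 :
    typed O G D1 P y A w2 ->
    typed O G ((x, (B, w2)) :: D2) Q z C w1 ->
    fresh_j y G ((x, (TLolli A B, w2)) :: D1 ++ D2) z ->
    wfj G ((x, (TLolli A B, w2)) :: D1 ++ D2) z ->
    typed O G ((x, (TLolli A B, w2)) :: D1 ++ D2) (PBOut x y (PPar P Q)) z C w1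
| T_tensorR O G D1 D2 P y A Q z B w :
    typed O G D1 P y A w ->
    typed O G D2 Q z B w ->
    fresh_j y G (D1 ++ D2) z ->
    wfj G (D1 ++ D2) z ->
    typed O G (D1 ++ D2) (PBOut z y (PPar P Q)) z (TTensor A B) w
| T_tensorL O G D y A x B P z C w1 w2 :
    typed O G ((y, (A, w2)) :: (x, (B, w2)) :: D) P z C w1 ->
    wfj G ((x, (TTensor A B, w2)) :: D) z ->
    typed O G ((x, (TTensor A B, w2)) :: D) (PIn x y P) z C w1
| T_withR O G D (ps : list (label * proc)) (bs : list (label * stype)) z w :
    NoDup (map fst bs) ->
    Permutation (map fst ps) (map fst bs) ->
    (forall l P A, In (l, P) ps -> In (l, A) bs -> typed O G D P z A w) ->
    wfj G D z ->
    typed O G D (PCase z ps) z (TWith bs) w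
| T_withL1 O G D x l A w2 P z C w1 :
    typed O G ((x, (A, w2)) :: D) P z C w1 ->
    wfj G ((x, (TWith [(l, A)], w2)) :: D) z ->
    typed O G ((x, (TWith [(l, A)], w2)) :: D) (PSel x l P) z C w1
| T_withL2 O G D x bs bs' k Ak w2 P z C w1 :
    typed O G ((x, (TWith bs, w2)) :: D) P z C w1 ->
    ~ In k (map fst bs) ->
    Permutation bs' ((k, Ak) :: bs) ->
    typed O G ((x, (TWith bs', w2)) :: D) P z C w1
| T_plusR1 O G D P z l A w :
    typed O G D P z A w ->
    wfj G D z ->
    typed O G D (PSel z l P) z (TPlus [(l, A)]) w
| T_plusR2 O G D P z bs bs' k Ak w :
    typed O G D P z (TPlus bs) w ->
    ~ In k (map fst bs) ->
    Permutation bs' ((k, Ak) :: bs) ->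
    typed O G D P z (TPlus bs') w
| T_plusL O G D x (qs : list (label * proc)) (bs : list (label * stype)) w2 z C w1 :
    NoDup (map fst bs) ->
    Permutation (map fst qs) (map fst bs) ->
    (forall l Q A, In (l, Q) qs -> In (l, A) bs ->
                   typed O G ((x, (A, w2)) :: D) Q z C w1) ->
    wfj G ((x, (TPlus bs, w2)) :: D) z ->
    typed O G ((x, (TPlus bs, w2)) :: D) (PCase x qs) z C w1
| T_bangR O G Q y A w z u :
    typed O G [] Q y A w ->
    fresh_j u G [] z ->
    wfj G [] z ->
    typed O G [] (PBOut z u (PRep u y Q)) z (TBang A) w
| T_bangL O G u A w2 D P z C w1 x :
    typed O ((u, (A, w2)) :: G) D P z C w1 ->
    wfj G ((x, (TBang A, w2)) :: D) z ->
    typed O G ((x, (TBang A, w2)) :: D) (PIn x u P) z C w1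
| T_copy O G u A w2 D y P z C w1 :
    In (u, (A, w2)) G ->
    reach O w1 w2 ->
    typed O G ((y, (A, w2)) :: D) P z C w1 ->
    wfj G D z ->
    typed O G D (PBOut u y P) z C w1
| T_cut O G D1 D2 P x A w2 Q z C w1 :
    reach O w1 w2 ->
    reach_ctx O w2 D1 ->
    typed O G D1 P x A w2 ->
    typed O G ((x, (A, w2)) :: D2) Q z C w1 ->
    wfj G (D1 ++ D2) z ->
    typed O G (D1 ++ D2) (PNu x (PPar P Q)) z C w1
| T_cutbang O G P x A w1 u D Q z C w2 :
    typed O G [] P x A w1 ->
    typed O ((u, (A, w1)) :: G) D Q z C w2 ->
    wfj G D z ->
    typed O G D (PNu u (PPar (PRep u x P) Q)) z C w2
| T_atR O G D P y A w1 w2 z :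
    acc O w1 w2 ->
    reach_ctx O w2 D ->
    typed O G D P y A w2 ->
    fresh_j y G D z ->
    wfj G D z ->
    typed O G D (PBOutAt z y w2 P) z (TAt (TD w2) A) w1
| T_atL O G D x y A w2 w3 P z C w1 :
    typed ((w2, w3) :: O) G ((y, (A, w3)) :: D) P z C w1 ->
    wfj G ((x, (TAt (TD w3) A, w2)) :: D) z ->
    typed O G ((x, (TAt (TD w3) A, w2)) :: D) (PInAt x y w3 P) z C w1
| T_allR O G D P z A w1 a :
    typed ((w1, DVar a) :: O) G D P z (open A (DVar a)) w1 ->
    ~ In a (accenv_fv O ++ ctx_fv G ++ ctx_fv D ++ dom_fv w1 ++ ty_fv A) ->
    wfj G D z ->
    typed O G D (PInD z a P) z (TAll A) w1
| T_allL O G D x A w2 w3 Q z C w1 :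
    acc O w2 w3 ->
    typed O G ((x, (open A w3, w2)) :: D) Q z C w1 ->
    wfj G ((x, (TAll A, w2)) :: D) z ->
    typed O G ((x, (TAll A, w2)) :: D) (POutD x w3 Q) z C w1
| T_exR O G D P z A w1 w2 :
    acc O w1 w2 ->
    typed O G D P z (open A w2) w1 ->
    wfj G D z ->
    typed O G D (POutD z w2 P) z (TEx A) w1
| T_exL O G D x A w2 Q z C w1 a :
    typed ((w2, DVar a) :: O) G ((x, (open A (DVar a), w2)) :: D) Q z C w1 ->
    ~ In a (accenv_fv O ++ ctx_fv G ++ ctx_fv D ++ dom_fv w1 ++ dom_fv w2
            ++ ty_fv A ++ ty_fv C) ->
    wfj G ((x, (TEx A, w2)) :: D) z ->
    typed O G ((x, (TEx A, w2)) :: D) (PInD x a Q) z C w1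
| T_downR O G D P z A w :
    typed O G D P z (open A w) w ->
    typed O G D P z (TDown A) w
| T_downL O G D x A w P z C w1 :
    typed O G ((x, (open A w, w)) :: D) P z C w1 ->
    typed O G ((x, (TDown A, w)) :: D) P z C w1
(* contexts are (multi)sets: exchange *)
| T_perm O G G' D D' P z A w :
    Permutation G G' -> Permutation D D' ->
    typed O G D P z A w -> typed O G' D' P z A w
| T_sc O G D P Q z A w :
    sc P Q -> typed O G D Q z A w -> typed O G D P z A w.

From Stdlib Require Import List Arith Lia Permutation Bool.
Import ListNotations.

(** By induction on typing, a process typed [G; D |- P :: z:C] either reduces, or is
    blocked, up to structural congruence, on a prefix of its interface: on [z] as the
    provider of [C], on a linear channel of [D] as a client of its type, on an output
    to a shared channel of [G], or as a forwarder onto [z]; or else it has no active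
    prefix and neither [C] nor any type in [D] expects an action.  At a cut the two
    sides block on the cut channel with dual prefixes and synchronise, or one of them
    is a forwarder on it and reduces, so the invariant is preserved.  A closed process offering [1]
    has an empty interface, so if it is live it must reduce. *)

Definition proc_nested_ind (Pr : proc -> Prop)
  (h_zero : Pr PZero)
  (h_par : forall P Q, Pr P -> Pr Q -> Pr (PPar P Q))
  (h_nu : forall x P, Pr P -> Pr (PNu x P))
  (h_out : forall x y P, Pr P -> Pr (POut x y P))
  (h_in : forall x y P, Pr P -> Pr (PIn x y P))
  (h_rep : forall x y P, Pr P -> Pr (PRep x y P))
  (h_fwd : forall x y, Pr (PFwd x y))
  (h_case : forall x bs, Forall (fun b => Pr (snd b)) bs -> Pr (PCase x bs))
  (h_sel : forall x l P, Pr P -> Pr (PSel x l P))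
  (h_outat : forall x y w P, Pr P -> Pr (POutAt x y w P))
  (h_inat : forall x y w P, Pr P -> Pr (PInAt x y w P))
  (h_outd : forall x w P, Pr P -> Pr (POutD x w P))
  (h_ind : forall x a P, Pr P -> Pr (PInD x a P)) : forall P, Pr P :=
  fix F P := match P as P0 return Pr P0 with
  | PZero => h_zero
  | PPar P Q => h_par P Q (F P) (F Q)
  | PNu x P => h_nu x P (F P)
  | POut x y P => h_out x y P (F P)
  | PIn x y P => h_in x y P (F P)
  | PRep x y P => h_rep x y P (F P)
  | PFwd x y => h_fwd x y
  | PCase x bs => h_case x bs
      ((fix G (bs : list (label * proc)) : Forall (fun b => Pr (snd b)) bs :=
          match bs with
          | [] => Forall_nil _
          | b :: bs' => Forall_cons b (F (snd b)) (G bs')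
          end) bs)
  | PSel x l P => h_sel x l P (F P)
  | POutAt x y w P => h_outat x y w P (F P)
  | PInAt x y w P => h_inat x y w P (F P)
  | POutD x w P => h_outd x w P (F P)
  | PInD x a P => h_ind x a P (F P)
  end.

Lemma fn_case x bs : fn (PCase x bs) = x :: flat_map (fun b => fn (snd b)) bs.
Proof.
  induction bs as [|[l Q] bs IH]; simpl in *; auto.
  injection IH as IH; rewrite IH; auto.
Qed.

Lemma names_case x bs : names (PCase x bs) = x :: flat_map (fun b => names (snd b)) bs.
Proof.
  induction bs as [|[l Q] bs IH]; simpl in *; auto.
  injection IH as IH; rewrite IH; auto.
Qed.

Lemma bnames_case x bs : bnames (PCase x bs) = flat_map (fun b => bnames (snd b)) bs.
Proof. induction bs as [|[l Q] bs IH]; simpl in *; congruence. Qed.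

Lemma bdvars_case x bs : bdvars (PCase x bs) = flat_map (fun b => bdvars (snd b)) bs.
Proof. induction bs as [|[l Q] bs IH]; simpl in *; congruence. Qed.

Lemma nsubst_case y x a bs :
  nsubst y x (PCase a bs) =
  PCase (if Nat.eqb a x then y else a) (map (fun b => (fst b, nsubst y x (snd b))) bs).
Proof.
  induction bs as [|[l Q] bs IH]; simpl in *; auto.
  injection IH as IH; rewrite IH; auto.
Qed.

Lemma dsubst_case d al a bs :
  dsubst d al (PCase a bs) = PCase a (map (fun b => (fst b, dsubst d al (snd b))) bs).
Proof.
  induction bs as [|[l Q] bs IH]; simpl in *; auto.
  injection IH as IH; rewrite IH; auto.
Qed.

Ltac destruct_eqb :=
  repeat match goal with
  | H : context [Nat.eqb ?a ?b] |- _ => destruct (Nat.eqb_spec a b)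
  | |- context [Nat.eqb ?a ?b] => destruct (Nat.eqb_spec a b)
  end.

Ltac destruct_ex :=
  repeat match goal with H : exists _, _ |- _ => destruct H | H : _ /\ _ |- _ => destruct H end.

Lemma bnames_nsubst y x P : bnames (nsubst y x P) = bnames P.
Proof.
  induction P using proc_nested_ind;
    try (rewrite nsubst_case, !bnames_case; induction H; simpl; congruence).
  all: simpl; destruct_eqb; simpl; congruence.
Qed.

Lemma bdvars_nsubst y x P : bdvars (nsubst y x P) = bdvars P.
Proof.
  induction P using proc_nested_ind;
    try (rewrite nsubst_case, !bdvars_case; induction H; simpl; congruence).
  all: simpl; destruct_eqb; simpl; congruence.
Qed.

Lemma bnames_dsubst d a P : bnames (dsubst d a P) = bnames P.
Proof.
  induction P using proc_nested_ind;
    try (rewrite dsubst_case, !bnames_case; induction H; simpl; congruence).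
  all: simpl; destruct_eqb; simpl; congruence.
Qed.

Lemma bdvars_dsubst d a P : bdvars (dsubst d a P) = bdvars P.
Proof.
  induction P using proc_nested_ind;
    try (rewrite dsubst_case, !bdvars_case; induction H; simpl; congruence).
  all: simpl; destruct_eqb; simpl; congruence.
Qed.

Lemma fn_dsubst d a P : fn (dsubst d a P) = fn P.
Proof.
  induction P using proc_nested_ind;
    try (rewrite dsubst_case, !fn_case; f_equal; induction H; simpl; congruence).
  all: simpl; destruct_eqb; simpl; congruence.
Qed.

Lemma in_remove_iff a b l : In a (remove Nat.eq_dec b l) <-> In a l /\ a <> b.
Proof. split; [apply in_remove | intros []; apply in_in_remove; auto]. Qed.

Lemma in_fn_names P n : In n (fn P) -> In n (names P).
Proof.
  revert n; induction P using proc_nested_ind; intros n Hn.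
  8: { rewrite fn_case in Hn; rewrite names_case.
       destruct Hn as [Hn|Hn]; [now left | right].
       induction H as [|[l Q] bs HQ _ IH]; simpl in *; [contradiction|].
       rewrite in_app_iff in *; specialize (HQ n); tauto. }
  all: simpl in *; try rewrite ?in_app_iff, ?in_remove_iff in *; simpl in *.
  all: repeat match goal with
              | IH : forall n, In n (fn ?P) -> _ |- context [names ?P] => specialize (IH n)
              end; tauto.
Qed.

Lemma in_fn_nsubst_inv {y x P n} :
  In n (fn (nsubst y x P)) -> n = y \/ (In n (fn P) /\ n <> x).
Proof.
  revert n; induction P using proc_nested_ind; intros n Hn.
  8: { rewrite nsubst_case, fn_case in Hn; rewrite fn_case; simpl in Hn.
       destruct Hn as [Hn|Hn].
       { destruct_eqb; subst; auto. right; split; simpl; auto. }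
       enough (n = y \/ In n (flat_map (fun b => fn (snd b)) bs) /\ n <> x) by (simpl; tauto).
       induction H as [|[l Q] bs HQ _ IH]; simpl in *; [contradiction|].
       rewrite in_app_iff in *; destruct Hn as [Hn|Hn].
       - destruct (HQ _ Hn); tauto.
       - destruct (IH Hn); tauto. }
  all: simpl in *; destruct_eqb; subst; simpl in *.
  all: try rewrite ?in_app_iff, ?in_remove_iff in *.
  all: repeat match goal with H : _ \/ _ |- _ => destruct H | H : _ /\ _ |- _ => destruct H end.
  all: repeat match goal with
              | IH : forall n, In n (fn (nsubst _ _ ?P)) -> _,
                H : In ?m (fn (nsubst _ _ ?P)) |- _ => apply IH in H
              end.
  all: intuition congruence.
Qed.

Lemma in_fn_nsubst y x P n : In n (fn P) -> n <> x -> In n (fn (nsubst y x P)).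
Proof.
  revert n; induction P using proc_nested_ind; intros n Hn Hnx.
  8: { rewrite nsubst_case, fn_case; rewrite fn_case in Hn; simpl in Hn.
       destruct Hn as [->|Hn].
       { destruct (Nat.eqb_spec n x); [congruence | now left]. }
       right. induction H as [|[l Q] bs HQ _ IH]; simpl in *; [contradiction|].
       rewrite in_app_iff in *; destruct Hn; auto. }
  all: simpl in *; destruct_eqb; subst; simpl in *.
  all: try rewrite ?in_app_iff, ?in_remove_iff in *.
  all: repeat match goal with H : _ \/ _ |- _ => destruct H | H : _ /\ _ |- _ => destruct H end.
  all: try (intuition congruence; fail).
  all: repeat match goal with
              | IH : forall n, In n (fn ?P) -> _ -> In n (fn (nsubst _ _ ?P)),
                H : In ?m (fn ?P) |- _ => let H' := fresh in assert (H' := IH _ H); clear H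
              end.
  all: intuition congruence.
Qed.

Lemma fn_alpha_iff x y P n : ~ In y (names P) ->
  In n (remove Nat.eq_dec x (fn P)) <-> In n (remove Nat.eq_dec y (fn (nsubst y x P))).
Proof.
  intros Hy; rewrite !in_remove_iff; split.
  - intros [H1 H2]; split.
    + apply in_fn_nsubst; auto.
    + intros ->; apply Hy, in_fn_names; auto.
  - intros [H1 H2]; destruct (in_fn_nsubst_inv H1) as [|[]]; auto; congruence.
Qed.

Lemma sc_fn_iff {P Q} : sc P Q -> forall n, In n (fn P) <-> In n (fn Q).
Proof.
  induction 1; intros n; try rewrite !fn_case; simpl;
    rewrite ?flat_map_app, ?in_app_iff, ?in_remove_iff; simpl;
    rewrite ?in_app_iff, ?in_remove_iff.
  all: try match goal with
           | H : ~ In ?y (names ?P) |- context [nsubst ?y ?x ?P] =>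
               pose proof (fn_alpha_iff x y P n H) as HA; rewrite !in_remove_iff in HA
           end.
  all: try rewrite fn_dsubst.
  all: repeat match goal with
              | IH : forall n, In n (fn _) <-> In n (fn _) |- _ => specialize (IH n)
              end.
  all: first [tauto | intuition congruence].
Qed.

Fixpoint active (P : proc) : bool :=
  match P with
  | PPar P Q => active P || active Q
  | PNu _ P => active P
  | PZero | PRep _ _ _ | PFwd _ _ => false
  | _ => true
  end.

Lemma active_nsubst y x P : active (nsubst y x P) = active P.
Proof.
  induction P; simpl; try destruct (Nat.eqb _ _); try destruct bs as [|[]]; simpl; congruence.
Qed.

Lemma active_dsubst d a P : active (dsubst d a P) = active P.
Proof.
  induction P; simpl; try destruct (Nat.eqb _ _); try destruct bs as [|[]]; simpl; congruence.
Qed.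

Lemma sc_active {P Q} : sc P Q -> active P = active Q.
Proof.
  induction 1; simpl; rewrite ?active_nsubst, ?active_dsubst; try congruence.
  - apply orb_false_r.
  - apply orb_comm.
  - symmetry; apply orb_assoc.
Qed.

Lemma live_active {P} : live P -> active P = true.
Proof.
  intros (ns & G & R & HG & HP); rewrite (sc_active HP); clear HP.
  induction ns; simpl; auto.
  destruct G; simpl in *; easy.
Qed.

Lemma names_nus ns X : names (nus ns X) = ns ++ names X.
Proof. induction ns; simpl; congruence. Qed.

Lemma bnames_nus ns X : bnames (nus ns X) = ns ++ bnames X.
Proof. induction ns; simpl; congruence. Qed.

Lemma dvars_nus ns X : dvars (nus ns X) = dvars X.
Proof. induction ns; simpl; congruence. Qed.

Lemma bdvars_nus ns X : bdvars (nus ns X) = bdvars X.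
Proof. induction ns; simpl; congruence. Qed.

Lemma nsubst_nus y x ns X : ~ In x ns -> nsubst y x (nus ns X) = nus ns (nsubst y x X).
Proof.
  induction ns as [|a ns IH]; simpl; intros Hx; auto.
  destruct (Nat.eqb_spec a x); [tauto | rewrite IH; auto].
Qed.

Lemma fn_nus ns X n : In n (fn X) -> In n ns \/ In n (fn (nus ns X)).
Proof.
  induction ns as [|a ns IH]; simpl; auto; intros H.
  destruct (IH H); auto.
  destruct (Nat.eq_dec n a); auto.
  right; apply in_in_remove; auto.
Qed.

Lemma sc_nus ns X Y : sc X Y -> sc (nus ns X) (nus ns Y).
Proof. intros H; induction ns; simpl; auto using sc_nu. Qed.

Lemma red_nus ns X Y : red X Y -> red (nus ns X) (nus ns Y).
Proof. intros H; induction ns; simpl; auto using red_nu. Qed.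

Lemma sc_extr_nus ns X Y : (forall m, In m ns -> ~ In m (fn X)) ->
  sc (PPar X (nus ns Y)) (nus ns (PPar X Y)).
Proof.
  induction ns as [|a ns IH]; simpl; intros H; [apply sc_refl|].
  eapply sc_trans; [apply sc_extr; auto | apply sc_nu, IH; auto].
Qed.

Lemma sc_extr_nus_l ns X Y : (forall m, In m ns -> ~ In m (fn X)) ->
  sc (PPar (nus ns Y) X) (nus ns (PPar Y X)).
Proof.
  intros H; eapply sc_trans; [apply sc_par_comm|].
  eapply sc_trans; [apply sc_extr_nus; auto | apply sc_nus, sc_par_comm].
Qed.

Lemma sc_nu_nus x ns X : sc (PNu x (nus ns X)) (nus ns (PNu x X)).
Proof.
  induction ns; simpl; [apply sc_refl|].
  eapply sc_trans; [apply sc_nu_swap | apply sc_nu; auto].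
Qed.

(** * Prefix shapes and alpha-conversion *)

Inductive kind : Type :=
| KOut | KIn | KSel (ls : list label) | KCase (ls : list label)
| KOutAt | KInAt | KOutD | KInD | KFwd (y : name).

Definition has_shape (k : kind) (n : name) (G : proc) : Prop :=
  match k with
  | KOut => exists y B, G = POut n y B
  | KIn => exists z B, G = PIn n z B
  | KSel ls => exists l B, G = PSel n l B /\ In l ls
  | KCase ls => exists bs, G = PCase n bs /\ incl ls (map fst bs)
  | KOutAt => exists y w B, G = POutAt n y w B
  | KInAt => exists z w B, G = PInAt n z w B
  | KOutD => exists w B, G = POutD n w B
  | KInD => exists a B, G = PInD n a B
  | KFwd y => G = PFwd y n
  end.

Definition subjects (k : kind) (n : name) : list name :=
  match k with KFwd y => [y; n] | _ => [n] end.

Lemma has_shape_nsubst k n G y x :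
  has_shape k n G -> ~ In x (subjects k n) -> has_shape k n (nsubst y x G).
Proof.
  intros Hs Hx.
  assert (Hn : n <> x) by (intros ->; apply Hx; destruct k; simpl; auto).
  destruct k; simpl in Hs |- *;
    destruct_ex; subst; try rewrite nsubst_case; simpl; destruct_eqb; try congruence; eauto.
  - eexists; split; [reflexivity | rewrite map_map; assumption].
  - subst; simpl in Hx; tauto.
Qed.

Lemma exists_fresh (l : list nat) : exists n, ~ In n l.
Proof.
  exists (S (list_max l)); intros Hin.
  pose proof (proj1 (list_max_le l (list_max l)) (le_n _)) as Hmax.
  rewrite Forall_forall in Hmax; apply Hmax in Hin; lia.
Qed.

Definition binders_avoid (S : list name) (Sd : list dvar) (X : proc) : Prop :=
  (forall n, In n S -> ~ In n (bnames X)) /\ (forall a, In a Sd -> ~ In a (bdvars X)).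

Ltac avoid_tac :=
  match goal with
  | H : forall n, In n ?S -> ~ In n ?X, Hs : In ?a ?S, Hb : In ?a ?X |- False => exact (H a Hs Hb)
  end.

Lemma alpha_branches x bs S Sd :
  Forall (fun b => exists P', sc (snd b) P' /\ binders_avoid S Sd P') bs ->
  exists bs', map fst bs' = map fst bs /\
    (forall pre, sc (PCase x (pre ++ bs)) (PCase x (pre ++ bs'))) /\
    binders_avoid S Sd (PCase x bs').
Proof.
  induction 1 as [|[l Q] bs (Q' & HQ & AQ1 & AQ2) _ (bs' & Hl & Hsc & A1 & A2)].
  - exists []; split; [reflexivity | split; [auto using sc_refl | split; simpl; auto]].
  - exists ((l, Q') :: bs'); simpl; split; [congruence | split].
    + intros pre; eapply sc_trans; [apply sc_case, HQ|].
      specialize (Hsc (pre ++ [(l, Q')])); rewrite <- !app_assoc in Hsc; exact Hsc.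
    + unfold binders_avoid in *; rewrite bnames_case, bdvars_case in *; simpl.
      split; intros m Hm; rewrite in_app_iff; intros [];
        [eapply AQ1 | eapply A1 | eapply AQ2 | eapply A2]; eauto.
Qed.

Lemma alpha_name_binder (B : name -> proc -> proc) y P S Sd :
  (forall P P', sc P P' -> sc (B y P) (B y P')) ->
  (forall y' P, ~ In y' (names P) -> sc (B y P) (B y' (nsubst y' y P))) ->
  (forall y' P, bnames (B y' P) = y' :: bnames P) ->
  (forall y' P, bdvars (B y' P) = bdvars P) ->
  (exists P', sc P P' /\ binders_avoid S Sd P') ->
  exists y' P', sc (B y P) (B y' P') /\ binders_avoid S Sd (B y' P').
Proof.
  intros Hcong Halpha Hbn Hbd (P' & E & A1 & A2).
  destruct (exists_fresh (S ++ names P')) as [y' Hy']; rewrite in_app_iff in Hy'.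
  exists y', (nsubst y' y P'); split.
  - eapply sc_trans; [apply Hcong, E | apply Halpha; tauto].
  - unfold binders_avoid; rewrite Hbn, Hbd, bnames_nsubst, bdvars_nsubst.
    split; [intros m Hm [<-|]; [tauto | avoid_tac] | auto].
Qed.

Ltac keep_shape :=
  let k := fresh "k" in let n := fresh "n" in let Hs := fresh "Hs" in
  intros k n Hs; destruct k; simpl in Hs |- *; destruct_ex; try discriminate;
  match goal with H : _ = _ |- _ => injection H; intros; subst end; eauto.

Ltac alpha_binder IH B y P S Sd :=
  destruct (alpha_name_binder B y P S Sd) as (y' & P' & E & A);
  [ eauto using sc_nu, sc_in, sc_rep, sc_inat
  | eauto using sc_alpha_nu, sc_alpha_in, sc_alpha_rep, sc_alpha_inat
  | reflexivity | reflexivity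
  | destruct (IH S Sd) as (? & ? & ? & _); eauto
  | exists (B y' P'); split; [exact E | split; [exact A | keep_shape]] ].

Lemma alpha_avoid P : forall S Sd, exists P',
  sc P P' /\ binders_avoid S Sd P' /\ (forall k n, has_shape k n P -> has_shape k n P').
Proof.
  induction P using proc_nested_ind; intros S Sd.
  - exists PZero; repeat split; auto using sc_refl; keep_shape.
  - destruct (IHP1 S Sd) as (P1' & E1 & [A1 B1] & _),
      (IHP2 S Sd) as (P2' & E2 & [A2 B2] & _).
    exists (PPar P1' P2'); split; [eapply sc_trans; [apply sc_par_l | apply sc_par_r]; eauto|].
    split; [split; simpl; intros; rewrite ?in_app_iff; intros []; avoid_tac | keep_shape].
  - alpha_binder IHP (fun y P => PNu y P) x P S Sd.
  - destruct (IHP S Sd) as (P' & E & A & _).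
    exists (POut x y P'); split; [apply sc_out, E | split; [exact A | keep_shape]].
  - alpha_binder IHP (PIn x) y P S Sd.
  - alpha_binder IHP (PRep x) y P S Sd.
  - exists (PFwd x y); split; [apply sc_refl | split; [split; simpl; auto | keep_shape]].
  - destruct (alpha_branches x bs S Sd) as (bs' & Hl & E & A).
    { eapply Forall_impl; [|exact H]; intros b IH.
      destruct (IH S Sd) as (? & ? & ? & _); eauto. }
    exists (PCase x bs'); split; [apply (E []) | split; [exact A|]].
    keep_shape; exists bs'; rewrite Hl; auto.
  - destruct (IHP S Sd) as (P' & E & A & _).
    exists (PSel x l P'); split; [apply sc_sel, E | split; [exact A | keep_shape]].
  - destruct (IHP S Sd) as (P' & E & A & _).
    exists (POutAt x y w P'); split; [apply sc_outat, E | split; [exact A | keep_shape]].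
  - alpha_binder IHP (fun y P => PInAt x y w P) y P S Sd.
  - destruct (IHP S Sd) as (P' & E & A & _).
    exists (POutD x w P'); split; [apply sc_outd, E | split; [exact A | keep_shape]].
  - destruct (IHP S Sd) as (P' & E & [A1 A2] & _).
    destruct (exists_fresh (Sd ++ dvars P')) as [b Hb]; rewrite in_app_iff in Hb.
    exists (PInD x b (dsubst (DVar b) a P')); split.
    + eapply sc_trans; [apply sc_cong_ind, E | apply sc_alpha_ind; tauto].
    + unfold binders_avoid; simpl; rewrite bnames_dsubst, bdvars_dsubst.
      split; [split; [auto | intros c Hc [<-|]; [tauto | avoid_tac]] | keep_shape].
Qed.

(** * Readiness *)

(** Quantifying over the sets to avoid lets the side conditions of reduction and of
    scope extrusion be met whenever ready processes are put together. *)
Definition ready (k : kind) (n : name) (P : proc) : Prop :=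
  forall S Sd, exists ns G R,
    sc P (nus ns (PPar G R)) /\ has_shape k n G /\ binders_avoid S Sd (nus ns (PPar G R)).

Lemma binders_avoid_nus_par S Sd ns G R :
  binders_avoid S Sd (nus ns (PPar G R)) <->
  (forall m, In m S -> ~ In m ns /\ ~ In m (bnames G) /\ ~ In m (bnames R)) /\
  (forall a, In a Sd -> ~ In a (bdvars G) /\ ~ In a (bdvars R)).
Proof.
  unfold binders_avoid; rewrite bnames_nus, bdvars_nus; simpl.
  split; intros [H1 H2]; split; intros m Hm;
    [specialize (H1 m Hm) | specialize (H2 m Hm) | specialize (H1 m Hm) | specialize (H2 m Hm)];
    rewrite !in_app_iff in *; tauto.
Qed.

Lemma ready_sc k n P Q : sc P Q -> ready k n Q -> ready k n P.
Proof.
  intros E HQ S Sd; destruct (HQ S Sd) as (ns & G & R & EQ & Hs & A).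
  exists ns, G, R; split; [eapply sc_trans; eauto | auto].
Qed.

Inductive kind_le : kind -> kind -> Prop :=
| kind_le_refl k : kind_le k k
| kind_le_sel ls ls' : incl ls ls' -> kind_le (KSel ls) (KSel ls').

Lemma ready_kind_le k k' n P : kind_le k k' -> ready k n P -> ready k' n P.
Proof.
  intros [|ls ls' Hincl] HP; auto.
  intros S Sd; destruct (HP S Sd) as (ns & G & R & E & (l & B & -> & Hl) & A).
  exists ns, (PSel n l B), R; split; [exact E | split; [simpl; eauto | exact A]].
Qed.

Lemma ready_prefix k n G : has_shape k n G -> ready k n G.
Proof.
  intros Hs S Sd; destruct (alpha_avoid G S Sd) as (G' & E & [A1 A2] & Hs').
  exists [], G', PZero; split; [simpl; eapply sc_trans; [exact E | apply sc_sym, sc_par_zero]|].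
  split; [auto|]; apply binders_avoid_nus_par; simpl; split; intros; repeat split; auto.
Qed.

Lemma ready_bound k n y B : has_shape k n B -> ~ In y (subjects k n) -> ready k n (PNu y B).
Proof.
  intros Hs Hy S Sd; destruct (alpha_avoid B S Sd) as (B' & E & [A1 A2] & Hs').
  destruct (exists_fresh (S ++ names B' ++ subjects k n)) as [y' Hy'].
  rewrite !in_app_iff in Hy'.
  exists [y'], (nsubst y' y B'), PZero; split.
  - simpl; eapply sc_trans; [apply sc_nu, E|].
    eapply sc_trans; [apply (sc_alpha_nu y y' B'); tauto | apply sc_nu, sc_sym, sc_par_zero].
  - split; [apply has_shape_nsubst; auto|].
    apply binders_avoid_nus_par; rewrite bnames_nsubst, bdvars_nsubst; simpl.
    split; intros; repeat split; auto; intros [->|[]]; tauto.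
Qed.

Lemma ready_lift k n P u X :
  ready k n P -> ~ In u (subjects k n) -> ready k n (PNu u (PPar P X)).
Proof.
  intros HP Hu S Sd; destruct (alpha_avoid X S Sd) as (X' & EX & [AX1 AX2] & _).
  destruct (HP (u :: subjects k n ++ S ++ names X') Sd) as (ns & G & R & E & Hs & A).
  apply binders_avoid_nus_par in A as [A1 A2].
  assert (Hns : forall m, In m (u :: subjects k n ++ S ++ names X') -> ~ In m ns)
    by (intros m Hm; apply A1, Hm).
  destruct (exists_fresh (S ++ names (nus ns (PPar G (PPar R X'))))) as [u' Hu'].
  rewrite in_app_iff in Hu'.
  exists (u' :: ns), (nsubst u' u G), (PPar (nsubst u' u R) (nsubst u' u X')); split.
  - eapply sc_trans; [apply sc_nu; eapply sc_trans; [apply sc_par_l, E | apply sc_par_r, EX]|].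
    eapply sc_trans.
    { apply sc_nu, sc_extr_nus_l; intros m Hm Hf.
      apply (Hns m); [right; rewrite !in_app_iff; right; right; apply in_fn_names |]; auto. }
    eapply sc_trans; [apply sc_nu, sc_nus, sc_par_assoc|].
    eapply sc_trans; [apply (sc_alpha_nu u u'); tauto|].
    rewrite nsubst_nus; [apply sc_refl | apply Hns; left; reflexivity].
  - split; [apply has_shape_nsubst; auto|].
    apply binders_avoid_nus_par; simpl; rewrite !bnames_nsubst, !bdvars_nsubst.
    split; intros m Hm; rewrite ?in_app_iff.
    + assert (Hm' : In m (u :: subjects k n ++ S ++ names X'))
        by (right; rewrite !in_app_iff; auto).
      destruct (A1 _ Hm') as (? & ? & ?); repeat split; auto.
      * intros [->|]; tauto.
      * intros []; [tauto | avoid_tac].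
    + destruct (A2 _ Hm); split; auto; intros []; [tauto | avoid_tac].
Qed.

Lemma ready_lift_r k n P u X :
  ready k n P -> ~ In u (subjects k n) -> ready k n (PNu u (PPar X P)).
Proof. intros; eapply ready_sc; [apply sc_nu, sc_par_comm | apply ready_lift; auto]. Qed.

Lemma ready_fwd_sym {y n P} : ready (KFwd y) n P -> ready (KFwd n) y P.
Proof.
  intros HP S Sd; destruct (HP S Sd) as (ns & G & R & E & Hs & A); simpl in Hs; subst G.
  exists ns, (PFwd n y), R; split; [|split; [reflexivity|]].
  - eapply sc_trans; [exact E | apply sc_nus, sc_par_l, sc_fwd].
  - apply binders_avoid_nus_par; apply binders_avoid_nus_par in A; exact A.
Qed.

(** * Synchronisation *)

Inductive dual : kind -> kind -> Prop :=
| dual_out : dual KOut KIn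
| dual_sel ls : dual (KSel ls) (KCase ls)
| dual_at : dual KOutAt KInAt
| dual_dom : dual KOutD KInD.

Lemma dual_prefixes_red {k1 k2 n G1 G2} :
  dual k1 k2 -> has_shape k1 n G1 -> has_shape k2 n G2 ->
  (forall m, In m (names G1) -> ~ In m (bnames G2)) ->
  (forall a, In a (dvars G1) -> ~ In a (bdvars G2)) ->
  exists C, red (PPar G1 G2) C.
Proof.
  intros Hd H1 H2 Hn Hdv; destruct Hd; simpl in *; destruct_ex; subst.
  - eexists; apply red_comm; intros Hb; eapply Hn; simpl; eauto.
  - match goal with Hl : In ?l ls, Hincl : incl ls (map fst ?bs) |- _ =>
      apply Hincl, in_map_iff in Hl; destruct Hl as [[l' Q] [<- HQ]] end.
    eexists; apply red_case; exact HQ.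
  - eexists; apply red_at; intros Hb; eapply Hn; simpl; eauto.
  - eexists; apply red_dom; intros b Hb Hb'; eapply Hdv; simpl; rewrite ?in_app_iff; eauto.
Qed.

Lemma sc_par_interleave G1 G2 R1 R2 :
  sc (PPar (PPar G2 R2) (PPar G1 R1)) (PPar (PPar G1 G2) (PPar R1 R2)).
Proof.
  eapply sc_trans; [apply sc_par_comm|].
  eapply sc_trans; [apply sc_par_assoc|].
  eapply sc_trans; [apply sc_par_r, sc_sym, sc_par_assoc|].
  eapply sc_trans; [apply sc_par_r, sc_par_l, sc_par_comm|].
  eapply sc_trans; [apply sc_par_r, sc_par_assoc | apply sc_sym, sc_par_assoc].
Qed.

Lemma ready_sync {k1 k2 n P1 P2} :
  dual k1 k2 -> ready k1 n P1 -> ready k2 n P2 -> exists Q, red (PNu n (PPar P1 P2)) Q.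
Proof.
  intros Hd H1 H2.
  destruct (H1 (n :: fn P2) []) as (ns1 & G1 & R1 & E1 & Hs1 & A1).
  destruct (H2 (n :: names (nus ns1 (PPar G1 R1))) (dvars (nus ns1 (PPar G1 R1))))
    as (ns2 & G2 & R2 & E2 & Hs2 & A2).
  apply binders_avoid_nus_par in A1 as [A1 _], A2 as [A2 A2d].
  rewrite names_nus, dvars_nus in *; simpl in *.
  destruct (dual_prefixes_red Hd Hs1 Hs2) as [C HC].
  { intros m Hm; apply A2; right; rewrite !in_app_iff; auto. }
  { intros a Ha; apply A2d; rewrite !in_app_iff; auto. }
  exists (PNu n (nus ns2 (nus ns1 (PPar C (PPar R1 R2))))).
  eapply red_sc; [| apply red_nu, red_nus, red_nus, red_par, HC | apply sc_refl].
  eapply sc_trans; [apply sc_nu; eapply sc_trans; [apply sc_par_l, E1 | apply sc_par_r, E2]|].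
  apply sc_nu; eapply sc_trans.
  { apply sc_extr_nus; intros m Hm Hf.
    apply in_fn_names in Hf; rewrite names_nus in Hf; simpl in Hf.
    destruct (A2 m) as [Hx _]; auto. }
  apply sc_nus; eapply sc_trans; [apply sc_par_comm|].
  eapply sc_trans; [apply sc_extr_nus | apply sc_nus, sc_par_interleave].
  intros m Hm Hf; destruct (fn_nus ns2 _ _ Hf) as [Hm2|Hm2].
  - destruct (A2 m) as [Hx _]; auto; right; rewrite !in_app_iff; auto.
  - apply (sc_fn_iff E2) in Hm2; destruct (A1 m) as [Hx _]; simpl; auto.
Qed.

Lemma ready_sync_rep u x P Q : ready KOut u Q -> exists R, red (PNu u (PPar (PRep u x P) Q)) R.
Proof.
  intros HQ; destruct (HQ (u :: fn (PRep u x P)) []) as (ns & G & R & E & (y & B & ->) & A).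
  apply binders_avoid_nus_par in A as [A _].
  destruct (alpha_avoid P (names (nus ns (PPar (POut u y B) R))) []) as (P' & EP & [AP _] & _).
  eexists; eapply red_sc; [| apply red_nu, red_nus, red_par, red_rep | apply sc_refl].
  - eapply sc_trans.
    { apply sc_nu; eapply sc_trans; [apply sc_par_l, sc_rep, EP | apply sc_par_r, E]. }
    apply sc_nu; eapply sc_trans.
    { apply sc_extr_nus; intros m Hm Hf.
      apply (sc_fn_iff (sc_rep u x _ _ EP)) in Hf; destruct (A m) as [Hx _]; simpl; auto. }
    apply sc_nus; eapply sc_trans; [apply sc_sym, sc_par_assoc | apply sc_par_l, sc_par_comm].
  - intros Hb; apply (AP y); auto.
    rewrite names_nus; simpl; rewrite !in_app_iff; simpl; tauto.
Qed.

Lemma ready_sync_fwd {y x P} Q : ready (KFwd y) x P -> exists R, red (PNu x (PPar P Q)) R.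
Proof.
  intros HP; destruct (HP (x :: y :: fn Q) []) as (ns & G & R & E & Hs & A).
  apply binders_avoid_nus_par in A as [A _]; simpl in Hs; subst G.
  destruct (alpha_avoid Q [y] []) as (Q' & EQ & [AQ _] & _).
  eexists; eapply red_sc; [| apply red_nus, red_fwd | apply sc_refl].
  - eapply sc_trans; [apply sc_nu; eapply sc_trans; [apply sc_par_l, E | apply sc_par_r, EQ]|].
    eapply sc_trans.
    { apply sc_nu, sc_extr_nus_l; intros m Hm Hf.
      apply (sc_fn_iff EQ) in Hf; destruct (A m) as [Hx _]; simpl; auto. }
    eapply sc_trans; [apply sc_nu_nus | apply sc_nus, sc_nu].
    eapply sc_trans; [apply sc_par_assoc | apply sc_par_l, sc_fwd].
  - simpl; rewrite in_app_iff; intros [Hb|Hb].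
    + destruct (A y) as (_ & _ & Hx); simpl; auto.
    + apply (AQ y); simpl; auto.
Qed.

Lemma ready_sync_fwd_r {x z} P {Q} : ready (KFwd x) z Q -> exists R, red (PNu x (PPar P Q)) R.
Proof.
  intros HQ; destruct (ready_sync_fwd P (ready_fwd_sym HQ)) as [R HR].
  exists R; eapply red_sc; [apply sc_nu, sc_par_comm | exact HR | apply sc_refl].
Qed.

(** * Progress *)

(** The prefix with which the provider, resp. a client, of a session of type [A] begins. *)
Fixpoint offer_kind (A : stype) : option kind :=
  match A with
  | TOne => None
  | TLolli _ _ => Some KIn
  | TTensor _ _ | TBang _ => Some KOut
  | TWith bs => Some (KCase (map fst bs))
  | TPlus bs => Some (KSel (map fst bs))
  | TAt _ _ => Some KOutAt
  | TAll _ => Some KInD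
  | TEx _ => Some KOutD
  | TDown A => offer_kind A
  end.

Fixpoint use_kind (A : stype) : option kind :=
  match A with
  | TOne => None
  | TLolli _ _ => Some KOut
  | TTensor _ _ | TBang _ => Some KIn
  | TWith bs => Some (KSel (map fst bs))
  | TPlus bs => Some (KCase (map fst bs))
  | TAt _ _ => Some KInAt
  | TAll _ => Some KOutD
  | TEx _ => Some KInD
  | TDown A => use_kind A
  end.

Lemma map_fst_open_branches k d (bs : list (label * stype)) :
  map fst ((fix go (bs : list (label * stype)) :=
              match bs with [] => [] | (l, B) :: bs' => (l, open_rec k d B) :: go bs' end) bs)
  = map fst bs.
Proof. induction bs as [|[l B] bs IH]; simpl; congruence. Qed.

Lemma offer_kind_open A k d : offer_kind (open_rec k d A) = offer_kind A.
Proof. revert k; induction A; intros; simpl; rewrite ?map_fst_open_branches; auto. Qed.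

Lemma use_kind_open A k d : use_kind (open_rec k d A) = use_kind A.
Proof. revert k; induction A; intros; simpl; rewrite ?map_fst_open_branches; auto. Qed.

Lemma offer_use_dual {A k1 k2} :
  offer_kind A = Some k1 -> use_kind A = Some k2 -> dual k1 k2 \/ dual k2 k1.
Proof.
  induction A; simpl; intros H1 H2; try discriminate; auto;
    injection H1 as <-; injection H2 as <-; auto using dual.
Qed.

Lemma offer_kind_None_iff A : offer_kind A = None <-> use_kind A = None.
Proof. induction A; simpl; easy. Qed.

Lemma offer_kind_subjects {A k n} : offer_kind A = Some k -> subjects k n = [n].
Proof. induction A; simpl; intros H; try discriminate; auto; injection H as <-; reflexivity. Qed.

Lemma use_kind_subjects {A k n} : use_kind A = Some k -> subjects k n = [n].
Proof. induction A; simpl; intros H; try discriminate; auto; injection H as <-; reflexivity. Qed.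

Definition kind_le_opt (o o' : option kind) : Prop :=
  match o, o' with
  | None, None => True
  | Some k, Some k' => kind_le k k'
  | _, _ => False
  end.

(** The interface prefixes on which a process typed [G; D |- _ :: z:C] may be blocked. *)
Inductive pending (G D : ctx) (z : name) (C : stype) : kind -> name -> Prop :=
| pending_offer k : offer_kind C = Some k -> pending G D z C k z
| pending_fwd y A w : In (y, (A, w)) D -> pending G D z C (KFwd y) z
| pending_use x A w k : In (x, (A, w)) D -> use_kind A = Some k -> pending G D z C k x
| pending_copy u A w : In (u, (A, w)) G -> pending G D z C KOut u.

Inductive progress (G D : ctx) (P : proc) (z : name) (C : stype) : Prop :=
| progress_red Q : red P Q -> progress G D P z C
| progress_ready k n : pending G D z C k n -> ready k n P -> progress G D P z C
| progress_idle : active P = false -> offer_kind C = None ->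
    (forall x A w, In (x, (A, w)) D -> use_kind A = None) -> progress G D P z C.

Lemma pending_subjects {G D z C k n} :
  pending G D z C k n -> incl (subjects k n) (z :: map fst G ++ map fst D).
Proof.
  intros Hp m Hm; destruct Hp as [k Hk | y A w Hy | x A w k Hx Hk | u A w Hu].
  - rewrite (offer_kind_subjects Hk) in Hm; destruct Hm as [<-|[]]; left; reflexivity.
  - destruct Hm as [<-|[<-|[]]]; [|left; reflexivity].
    right; apply in_or_app; right; apply (in_map fst _ _ Hy).
  - rewrite (use_kind_subjects Hk) in Hm; destruct Hm as [<-|[]].
    right; apply in_or_app; right; apply (in_map fst _ _ Hx).
  - destruct Hm as [<-|[]]; right; apply in_or_app; left; apply (in_map fst _ _ Hu).
Qed.

Lemma pending_incl G G' D D' z C k n :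
  incl G G' -> incl D D' -> pending G D z C k n -> pending G' D' z C k n.
Proof. intros HG HD []; eauto using pending. Qed.

Lemma pending_lin_inv {G x A w D z C k n} :
  pending G ((x, (A, w)) :: D) z C k n ->
  (n = x /\ use_kind A = Some k) \/ (k = KFwd x /\ n = z) \/ pending G D z C k n.
Proof.
  intros [k' Hk | y B w' [Hy|Hy] | m B w' k' [Hm|Hm] Hk | u B w' Hu];
    try injection Hy as -> -> ->; try injection Hm as -> -> ->; eauto using pending.
Qed.

Lemma pending_shared_inv {u A w G D z C k n} :
  pending ((u, (A, w)) :: G) D z C k n -> (k = KOut /\ n = u) \/ pending G D z C k n.
Proof.
  intros [k' Hk | y B w' Hy | m B w' k' Hm Hk | v B w' [Hv|Hv]];
    try injection Hv as -> -> ->; eauto using pending.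
Qed.

Lemma typed_wfj O G D P z C w : typed O G D P z C w -> wfj G D z.
Proof.
  induction 1; auto.
  unfold wfj in *; eapply Permutation_NoDup; [|eassumption].
  apply perm_skip, Permutation_app; apply Permutation_map; auto.
Qed.

Lemma wfj_subject_fresh {G D z} : wfj G D z -> ~ In z (map fst G ++ map fst D).
Proof. intros W; inversion W; auto. Qed.

Lemma wfj_lin_fresh {G x e D z} : wfj G ((x, e) :: D) z -> ~ In x (z :: map fst G ++ map fst D).
Proof. apply (NoDup_remove_2 (z :: map fst G)). Qed.

Lemma wfj_shared_fresh {u e G D z} : wfj ((u, e) :: G) D z -> ~ In u (z :: map fst G ++ map fst D).
Proof. apply (NoDup_remove_2 [z]). Qed.

Lemma pending_cut_left {G D1} D2 {x A} z C {k n} :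
  wfj G D1 x -> pending G D1 x A k n ->
  (n = x /\ offer_kind A = Some k) \/ (exists y, k = KFwd y /\ n = x) \/
  (pending G (D1 ++ D2) z C k n /\ ~ In x (subjects k n)).
Proof.
  intros W [k' Hk | y B w Hy | m B w k' Hm Hk | u B w Hu]; eauto; right; right; split.
  - eapply pending_use; eauto using in_or_app.
  - rewrite (use_kind_subjects Hk); intros [<-|[]].
    apply (wfj_subject_fresh W), in_or_app; right; apply (in_map fst _ _ Hm).
  - eapply pending_copy; eauto.
  - intros [<-|[]]; apply (wfj_subject_fresh W), in_or_app; left; apply (in_map fst _ _ Hu).
Qed.

Lemma pending_cut_right {G} D1 {D2 x A w z C k n} :
  wfj G ((x, (A, w)) :: D2) z -> pending G ((x, (A, w)) :: D2) z C k n ->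
  (n = x /\ use_kind A = Some k) \/ (k = KFwd x /\ n = z) \/
  (pending G (D1 ++ D2) z C k n /\ ~ In x (subjects k n)).
Proof.
  intros W Hp; destruct (pending_lin_inv Hp) as [?|[?|Hp']]; auto.
  right; right; split.
  - eapply pending_incl; [apply incl_refl | apply incl_appr, incl_refl | exact Hp'].
  - intros Hx; apply (wfj_lin_fresh W), (pending_subjects Hp'), Hx.
Qed.

Lemma red_cut_r x P Q Q' : red Q Q' -> red (PNu x (PPar P Q)) (PNu x (PPar Q' P)).
Proof.
  intros H; eapply red_sc; [apply sc_nu, sc_par_comm | apply red_nu, red_par, H | apply sc_refl].
Qed.

Lemma progress_cut G D1 D2 P Q x A w z C :
  wfj G D1 x -> wfj G ((x, (A, w)) :: D2) z ->
  progress G D1 P x A -> progress G ((x, (A, w)) :: D2) Q z C ->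
  progress G (D1 ++ D2) (PNu x (PPar P Q)) z C.
Proof.
  intros W1 W2 HP HQ.
  destruct HP as [P' HP | k1 n1 Hp1 Hr1 | Hact1 Hoff1 Huse1].
  - eapply progress_red, red_nu, red_par, HP.
  - destruct (pending_cut_left D2 z C W1 Hp1)
      as [[-> Hk1] | [(y & -> & ->) | [Hp Hx]]].
    + destruct HQ as [Q' HQ | k2 n2 Hp2 Hr2 | _ _ Huse2].
      * eapply progress_red, red_cut_r, HQ.
      * destruct (pending_cut_right D1 W2 Hp2)
          as [[-> Hk2] | [[-> ->] | [Hp Hx]]].
        -- destruct (offer_use_dual Hk1 Hk2) as [Hd|Hd].
           ++ destruct (ready_sync Hd Hr1 Hr2) as [R HR]; eapply progress_red, HR.
           ++ destruct (ready_sync Hd Hr2 Hr1) as [R HR].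
              eapply progress_red, red_sc; [apply sc_nu, sc_par_comm | exact HR | apply sc_refl].
        -- destruct (ready_sync_fwd_r P Hr2) as [R HR]; eapply progress_red, HR.
        -- eapply progress_ready; [exact Hp | apply ready_lift_r; auto].
      * exfalso; pose proof (proj2 (offer_kind_None_iff A) (Huse2 x A w (or_introl eq_refl))).
        congruence.
    + destruct (ready_sync_fwd Q Hr1) as [R HR]; eapply progress_red, HR.
    + eapply progress_ready; [exact Hp | apply ready_lift; auto].
  - destruct HQ as [Q' HQ | k2 n2 Hp2 Hr2 | Hact2 Hoff2 Huse2].
    + eapply progress_red, red_cut_r, HQ.
    + destruct (pending_cut_right D1 W2 Hp2)
        as [[-> Hk2] | [[-> ->] | [Hp Hx]]].
      * apply offer_kind_None_iff in Hoff1; congruence.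
      * destruct (ready_sync_fwd_r P Hr2) as [R HR]; eapply progress_red, HR.
      * eapply progress_ready; [exact Hp | apply ready_lift_r; auto].
    + apply progress_idle; [simpl; rewrite Hact1, Hact2; reflexivity | exact Hoff2|].
      intros m B w' Hm; apply in_app_or in Hm as [Hm|Hm]; eauto.
      apply (Huse2 m B w'); right; exact Hm.
Qed.

Lemma progress_cutbang G D P Q u y A w z C :
  wfj ((u, (A, w)) :: G) D z -> progress ((u, (A, w)) :: G) D Q z C ->
  progress G D (PNu u (PPar (PRep u y P) Q)) z C.
Proof.
  intros W [Q' HQ | k n Hp Hr | Hact Hoff Huse].
  - eapply progress_red, red_cut_r, HQ.
  - destruct (pending_shared_inv Hp) as [[-> ->] | Hp'].
    + destruct (ready_sync_rep _ y P _ Hr) as [R HR]; eapply progress_red, HR.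
    + eapply progress_ready; [exact Hp' | apply ready_lift_r; auto].
      intros Hu; apply (wfj_shared_fresh W), (pending_subjects Hp'), Hu.
  - apply progress_idle; auto.
Qed.

Lemma progress_weaken_lin G D P z C x A w :
  use_kind A = None -> progress G D P z C -> progress G ((x, (A, w)) :: D) P z C.
Proof.
  intros HA [Q HQ | k n Hp Hr | Hact Hoff Huse].
  - eapply progress_red, HQ.
  - eapply progress_ready; [eapply pending_incl, Hp; auto using incl_refl, incl_tl | exact Hr].
  - apply progress_idle; auto.
    intros m B w' [Hm|Hm]; [injection Hm as <- <- <-; exact HA | eauto].
Qed.

Lemma progress_retype_lin G D P z C x A A' w :
  progress G ((x, (A, w)) :: D) P z C -> kind_le_opt (use_kind A) (use_kind A') ->
  progress G ((x, (A', w)) :: D) P z C.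
Proof.
  intros [Q HQ | k n Hp Hr | Hact Hoff Huse] Hle.
  - eapply progress_red, HQ.
  - destruct (pending_lin_inv Hp) as [[-> Hk] | [[-> ->] | Hp']].
    + rewrite Hk in Hle; destruct (use_kind A') as [k'|] eqn:Hk'; [|contradiction].
      eapply progress_ready; [eapply pending_use; [left; reflexivity | exact Hk'] |].
      eapply ready_kind_le; eauto.
    + eapply progress_ready; [eapply pending_fwd; left; reflexivity | exact Hr].
    + eapply progress_ready; [eapply pending_incl, Hp'; auto using incl_refl, incl_tl | exact Hr].
  - apply progress_idle; auto.
    intros m B w' [Hm|Hm]; [injection Hm as <- <- <- | apply (Huse m B w'); right; exact Hm].
    rewrite (Huse x A w (or_introl eq_refl)) in Hle; destruct (use_kind A'); easy.
Qed.

Lemma progress_retype_offer G D P z C C' :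
  progress G D P z C -> kind_le_opt (offer_kind C) (offer_kind C') -> progress G D P z C'.
Proof.
  intros [Q HQ | k n Hp Hr | Hact Hoff Huse] Hle.
  - eapply progress_red, HQ.
  - destruct Hp as [k Hk | | |]; eauto using progress, pending.
    rewrite Hk in Hle; destruct (offer_kind C') as [k'|] eqn:Hk'; [|contradiction].
    eapply progress_ready; [apply pending_offer, Hk' | eapply ready_kind_le; eauto].
  - apply progress_idle; auto.
    rewrite Hoff in Hle; destruct (offer_kind C'); easy.
Qed.

Lemma progress_perm G G' D D' P z C :
  Permutation G G' -> Permutation D D' -> progress G D P z C -> progress G' D' P z C.
Proof.
  intros HG HD [Q HQ | k n Hp Hr | Hact Hoff Huse].
  - eapply progress_red, HQ.
  - eapply progress_ready; [|exact Hr].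
    eapply pending_incl, Hp; intros e He; eapply Permutation_in; eauto.
  - apply progress_idle; auto.
    intros m B w Hm; eapply Huse, Permutation_in; [symmetry|]; eauto.
Qed.

Lemma progress_sc G D P P' z C : sc P P' -> progress G D P' z C -> progress G D P z C.
Proof.
  intros E [Q HQ | k n Hp Hr | Hact Hoff Huse].
  - eapply progress_red, red_sc; [exact E | exact HQ | apply sc_refl].
  - eapply progress_ready; [exact Hp | eapply ready_sc; eauto].
  - apply progress_idle; auto; rewrite (sc_active E); exact Hact.
Qed.

Lemma progress_offer_prefix G D P z C k :
  offer_kind C = Some k -> has_shape k z P -> progress G D P z C.
Proof. intros; eapply progress_ready; [apply pending_offer | apply ready_prefix]; eauto. Qed.

Lemma progress_offer_bound G D y B z C k :
  offer_kind C = Some k -> has_shape k z B -> fresh_j y G D z -> progress G D (PNu y B) z C.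
Proof.
  intros Hk Hs Hy; eapply progress_ready; [apply pending_offer, Hk | apply ready_bound; auto].
  rewrite (offer_kind_subjects Hk); intros [->|[]]; apply Hy; left; reflexivity.
Qed.

Lemma progress_use_prefix G D P z C x A w k :
  In (x, (A, w)) D -> use_kind A = Some k -> has_shape k x P -> progress G D P z C.
Proof. intros; eapply progress_ready; [eapply pending_use | apply ready_prefix]; eauto. Qed.

Lemma kind_le_opt_refl o : kind_le_opt o o.
Proof. destruct o; simpl; auto using kind_le. Qed.

Lemma kind_le_opt_branches {T} (bs bs' : list (label * T)) k :
  Permutation bs' (k :: bs) ->
  kind_le_opt (Some (KSel (map fst bs))) (Some (KSel (map fst bs'))).
Proof.
  intros Hp; simpl; apply kind_le_sel; intros l Hl.
  eapply Permutation_in; [symmetry; apply Permutation_map, Hp | right; exact Hl].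
Qed.

Lemma fresh_j_lin y G x e D z : fresh_j y G ((x, e) :: D) z -> ~ In y [x].
Proof. intros Hy [->|[]]; apply Hy; right; apply in_or_app; right; left; reflexivity. Qed.

Lemma wfj_lin_not_shared G y e D z u e' : wfj G ((y, e) :: D) z -> In (u, e') G -> ~ In y [u].
Proof.
  intros W Hu [->|[]]; apply (wfj_lin_fresh W).
  right; apply in_or_app; left; apply (in_map fst _ _ Hu).
Qed.

Lemma typed_progress {O G D P z C w} : typed O G D P z C w -> progress G D P z C.
Proof.
  induction 1.
  - eapply progress_ready; [eapply pending_fwd, in_eq | apply ready_prefix; reflexivity].
  - apply progress_idle; [reflexivity | reflexivity | intros ? ? ? []].
  - apply progress_weaken_lin; auto.
  - eapply progress_offer_prefix; [reflexivity | simpl; eauto].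
  - eapply progress_ready; [eapply pending_use; [left; reflexivity | reflexivity] |].
    apply ready_bound; [simpl; eauto | eapply fresh_j_lin; eauto].
  - eapply progress_offer_bound; [reflexivity | simpl; eauto | eassumption].
  - eapply progress_use_prefix; [left; reflexivity | reflexivity | simpl; eauto].
  - eapply progress_offer_prefix; [reflexivity | simpl; exists ps; split; auto].
    intros l Hl; eapply Permutation_in; [symmetry|]; eauto.
  - eapply progress_use_prefix; [left; reflexivity | reflexivity | simpl; eauto using in_eq].
  - eapply progress_retype_lin; [eassumption | eapply kind_le_opt_branches; eauto].
  - eapply progress_offer_prefix; [reflexivity | simpl; eauto using in_eq].
  - eapply progress_retype_offer; [eassumption | eapply kind_le_opt_branches; eauto].
  - eapply progress_use_prefix; [left; reflexivity | reflexivity | simpl; exists qs; split; auto].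
    intros l Hl; eapply Permutation_in; [symmetry|]; eauto.
  - eapply progress_offer_bound; [reflexivity | simpl; eauto | eassumption].
  - eapply progress_use_prefix; [left; reflexivity | reflexivity | simpl; eauto].
  - eapply progress_ready; [eapply pending_copy; eauto |].
    apply ready_bound; [simpl; eauto | eapply wfj_lin_not_shared; eauto using typed_wfj].
  - eapply progress_cut; eauto using typed_wfj.
  - eapply progress_cutbang; eauto using typed_wfj.
  - eapply progress_offer_bound; [reflexivity | simpl; eauto | eassumption].
  - eapply progress_use_prefix; [left; reflexivity | reflexivity | simpl; eauto].
  - eapply progress_offer_prefix; [reflexivity | simpl; eauto].
  - eapply progress_use_prefix; [left; reflexivity | reflexivity | simpl; eauto].
  - eapply progress_offer_prefix; [reflexivity | simpl; eauto].
  - eapply progress_use_prefix; [left; reflexivity | reflexivity | simpl; eauto].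
  - eapply progress_retype_offer; [eassumption|].
    unfold open; simpl; rewrite offer_kind_open; apply kind_le_opt_refl.
  - eapply progress_retype_lin; [eassumption|].
    unfold open; simpl; rewrite use_kind_open; apply kind_le_opt_refl.
  - eapply progress_perm; eauto.
  - eapply progress_sc; eauto.
Qed.

Theorem theorem5 (O : accenv) (P : proc) (x : name) (w : dom) :
  typed O nil nil P x TOne w -> live P -> exists Q, red P Q.
Proof.
  intros Ht Hlive.
  destruct (typed_progress Ht) as [Q HQ | k n Hp _ | Hact _ _].
  - exists Q; exact HQ.
  - destruct Hp; simpl in *; easy.
  - rewrite (live_active Hlive) in Hact; discriminate.
Qed.
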